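(* Let $1<\beta<2$ and let $r^{(\beta)}_k$ ($k\in\mathbb{Z}$) be as defined in the context. Then $$\sum_{k=0}^{m}r^{(\beta)}_{j-k}>0\quad\text{for all } m\ge2,\ 1\le j\le m-1,$$ and $$\sum_{k=1-m}^{m-1}r^{(\beta)}_{k}>\frac{c^{(\beta)}_{\ast}}{m^{\beta}}>0\quad\text{for all } m\ge2,$$ where $c^{(\beta)}_{\ast}=\frac{(1-\beta)(2-\beta)(3-\beta)4^{\beta}e^{-9/4}\Psi_\beta}{3}$ and $\Psi_\beta=\frac{1}{2\cos(\pi\beta/2)}$.
   Context: Let $g^{(\beta)}_k=(-1)^k\binom{\beta}{k}$ for $k\ge0$ (equivalently $g^{(\beta)}_0=1$, $g^{(\beta)}_k=(1-\frac{\beta+1}{k})g^{(\beta)}_{k-1}$). Let $\Psi_\beta=\frac{1}{2\cos(\pi\beta/2)}$ and define $r^{(\beta)}_0=2\Psi_\beta\big(\frac{\beta}{2}g^{(\beta)}_1+\frac{2-\beta}{2}g^{(\beta)}_0\big)$, $r^{(\beta)}_1=\Psi_\beta\big(\frac{\beta}{2}g^{(\beta)}_0+\frac{2-\beta}{2}g^{(\beta)}_1+\frac{\beta}{2}g^{(\beta)}_2\big)$, $r^{(\beta)}_k=\Psi_\beta\big(\frac{\beta}{2}g^{(\beta)}_{k+1}+\frac{2-\beta}{2}g^{(\beta)}_k\big)$ for $k\ge2$, and $r^{(\beta)}_{-k}=r^{(\beta)}_k$ for $k\ge1$. *)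

From Stdlib Require Import Reals Lra Lia ZArith.
Open Scope R_scope.

(* g^(beta)_k = (-1)^k binom(beta,k), via the recurrence
   g_0 = 1, g_k = (1 - (beta+1)/k) g_{k-1}. *)
Fixpoint gcoef (beta : R) (k : nat) : R :=
  match k with
  | O => 1
  | S k' => (1 - (beta + 1) / INR (S k')) * gcoef beta k'
  end.

Definition Psi (beta : R) : R := 1 / (2 * cos (PI * beta / 2)).

Definition rnat (beta : R) (k : nat) : R :=
  match k with
  | O => 2 * Psi beta * (beta / 2 * gcoef beta 1 + (2 - beta) / 2 * gcoef beta 0)
  | 1%nat => Psi beta * (beta / 2 * gcoef beta 0 + (2 - beta) / 2 * gcoef beta 1
                          + beta / 2 * gcoef beta 2)
  | _ => Psi beta * (beta / 2 * gcoef beta (S k) + (2 - beta) / 2 * gcoef beta k)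
  end.

Definition r (beta : R) (k : Z) : R := rnat beta (Z.abs_nat k).

Definition zsum (a b : Z) (f : Z -> R) : R :=
  match (b - a)%Z with
  | Zneg _ => 0
  | d => sum_f_R0 (fun i => f (a + Z.of_nat i)%Z) (Z.to_nat d)
  end.

Definition cstar (beta : R) : R :=
  (1 - beta) * (2 - beta) * (3 - beta) * Rpower 4 beta * exp (- (9 / 4)) * Psi beta / 3.

(** Writing [S_n = g_0 + ... + g_n], the one-sided sums of the [r_k] are
    [r_0/2 + Psi (beta/2 S_(n+1) + (2-beta)/2 S_n)], and two-sided sums are sums
    of two one-sided ones.  The [S_n] satisfy [S_(n+1) = S_n (n + 1 - beta) / (n + 1)],
    so for [1 < beta < 2] they are negative and increasing from [S_1 = 1 - beta];
    as [Psi < 0], this gives the first claim.  For the second, [ln x >= 1 - 1/x]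
    shows that [ln (-S_n) + beta ln n] decreases by at most [1/(n-1) - 1/(n+1)]
    per step, whence [-S_m m^beta > -S_2 2^beta e^(-3/2)], and this exceeds
    [c_* / (-2 Psi)]. *)

From Stdlib Require Import Reals ZArith Lra Lia.
Open Scope R_scope.

Lemma sum_f_R0_rev (f : nat -> R) n :
  sum_f_R0 (fun i => f (n - i)%nat) n = sum_f_R0 f n.
Proof.
  revert f; induction n as [|n IH]; intros f; [reflexivity|].
  rewrite tech5, Nat.sub_diag.
  rewrite (sum_eq _ (fun i => f (S (n - i)))) by (intros i hi; f_equal; lia).
  rewrite (IH (fun k => f (S k))), (decomp_sum f (S n)) by lia.
  simpl pred; ring.
Qed.

Lemma zsum_nat a b f : (a <= b)%Z ->
  zsum a b f = sum_f_R0 (fun i => f (a + Z.of_nat i)%Z) (Z.to_nat (b - a)).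
Proof. intros hab; unfold zsum; destruct (b - a)%Z eqn:E; [reflexivity | reflexivity | lia]. Qed.

Lemma zsum_ext a b f g : (forall k, f k = g k) -> zsum a b f = zsum a b g.
Proof.
  intros hfg; unfold zsum.
  destruct (b - a)%Z; try reflexivity; apply sum_eq; intros i _; apply hfg.
Qed.

Lemma zsum_succ_r a b f : (a <= b + 1)%Z -> zsum a (b + 1) f = zsum a b f + f (b + 1)%Z.
Proof.
  intros hab.
  destruct (Z.eq_dec a (b + 1)) as [-> | hne].
  - unfold zsum; replace (b - (b + 1))%Z with (-1)%Z by ring.
    rewrite Z.sub_diag; simpl; rewrite Z.add_0_r; ring.
  - rewrite !zsum_nat by lia.
    replace (Z.to_nat (b + 1 - a)) with (S (Z.to_nat (b - a))) by lia.
    rewrite tech5; do 2 f_equal; lia.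
Qed.

Lemma zsum_reflect a b c f : (a <= b)%Z ->
  zsum a b (fun k => f (c - k)%Z) = zsum (c - b) (c - a) f.
Proof.
  intros hab; rewrite !zsum_nat by lia.
  replace (c - a - (c - b))%Z with (b - a)%Z by ring.
  rewrite <- sum_f_R0_rev; apply sum_eq; intros i hi; f_equal; lia.
Qed.

Lemma zsum_abs (f : nat -> R) (p q : nat) :
  zsum (- Z.of_nat p) (Z.of_nat q) (fun k => f (Z.abs_nat k))
  = sum_f_R0 f p + sum_f_R0 f q - f 0%nat.
Proof.
  induction q as [|q IH].
  - rewrite (zsum_ext _ _ _ (fun k => f (Z.abs_nat (0 - k)))) by (intros k; f_equal; lia).
    rewrite (zsum_reflect _ _ 0 (fun z => f (Z.abs_nat z))), zsum_nat by lia.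
    replace (Z.to_nat (0 - - Z.of_nat p - (0 - Z.of_nat 0))) with p by lia.
    rewrite (sum_eq _ f) by (intros i _; f_equal; lia).
    simpl; ring.
  - rewrite Nat2Z.inj_succ, <- Z.add_1_r, zsum_succ_r, IH by lia.
    rewrite tech5; replace (Z.abs_nat (Z.of_nat q + 1)) with (S q) by lia; ring.
Qed.

Definition gsum (beta : R) (n : nat) : R := sum_f_R0 (gcoef beta) n.

Definition rsum (beta : R) (n : nat) : R := sum_f_R0 (rnat beta) n.

Lemma zsum_r beta (p q : nat) :
  zsum (- Z.of_nat p) (Z.of_nat q) (r beta) = rsum beta p + rsum beta q - rnat beta 0.
Proof. exact (zsum_abs (rnat beta) p q). Qed.

Lemma beta_mul_gsum beta n : beta * gsum beta n = (beta - INR n) * gcoef beta n.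
Proof.
  induction n as [|n IH].
  - unfold gsum; simpl; ring.
  - unfold gsum in *; rewrite tech5, Rmult_plus_distr_l, IH.
    cbn [gcoef]; rewrite S_INR.
    assert (0 <= INR n) by apply pos_INR.
    field; lra.
Qed.

Lemma gsum_S beta n : beta <> 0 ->
  gsum beta (S n) = gsum beta n * (INR n + 1 - beta) / (INR n + 1).
Proof.
  intros hb; assert (0 <= INR n) by apply pos_INR.
  apply Rmult_eq_reg_l with beta; [|exact hb].
  replace (beta * (gsum beta n * (INR n + 1 - beta) / (INR n + 1)))
    with (beta * gsum beta n * (INR n + 1 - beta) / (INR n + 1)) by (field; lra).
  rewrite !beta_mul_gsum; cbn [gcoef]; rewrite S_INR.
  field; lra.
Qed.

Lemma gsum_1 beta : gsum beta 1 = 1 - beta.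
Proof. unfold gsum; simpl; field. Qed.

Lemma gsum_2 beta : gsum beta 2 = (1 - beta) * (2 - beta) / 2.
Proof. unfold gsum; simpl; field. Qed.

Lemma rsum_gsum beta n : (1 <= n)%nat ->
  rsum beta n
  = rnat beta 0 / 2 + Psi beta * (beta / 2 * gsum beta (S n) + (2 - beta) / 2 * gsum beta n).
Proof.
  intros hn; induction n as [|n IH]; [lia|].
  destruct n as [|n].
  - unfold rsum, gsum; simpl; field.
  - unfold rsum, gsum in *; rewrite tech5, IH by lia.
    rewrite (tech5 (gcoef beta) (S (S n))), (tech5 (gcoef beta) (S n)).
    cbn [rnat]; ring.
Qed.

Lemma ln_ge_1_minus_inv x : 0 < x -> 1 - / x <= ln x.
Proof.
  intros hx; assert (h := exp_ineq1_le (ln (/ x))).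
  rewrite exp_ln, ln_Rinv in h by (auto; apply Rinv_0_lt_compat; auto).
  lra.
Qed.

Lemma exp_quarter_le : exp (1 / 4) <= 3 / 2.
Proof.
  assert (h : exp 1 = (exp (1 / 4) * exp (1 / 4)) * (exp (1 / 4) * exp (1 / 4))).
  { rewrite <- !exp_plus; f_equal; field. }
  assert (h3 := exp_le_3); assert (hp := exp_pos (1 / 4)).
  destruct (Rle_lt_dec (exp (1 / 4)) (3 / 2)) as [ok | bad]; [exact ok|].
  assert (exp (1 / 4) * exp (1 / 4) > 9 / 4) by nra.
  nra.
Qed.

Lemma ln_2_lt_1 : ln 2 < 1.
Proof.
  rewrite <- ln_exp; apply ln_increasing; [lra|].
  assert (h := exp_ineq1 1 ltac:(lra)); lra.
Qed.

(* From [3 - b <= e^(2 - b)] and [2 + b (ln 2 - 1) <= 1 + ln 2]. *)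
Lemma Rpower_2_bound b : 1 <= b -> (3 - b) * Rpower 2 b * exp (- (3 / 4)) <= 3.
Proof.
  intros hb; unfold Rpower.
  assert (h3 : 3 - b <= exp (2 - b)) by (assert (h := exp_ineq1_le (2 - b)); lra).
  assert (hexp : exp (2 - b + b * ln 2 + - (3 / 4)) <= exp (1 / 4 + ln 2)).
  { assert (h := ln_2_lt_1).
    destruct (Req_dec (2 - b + b * ln 2 + - (3 / 4)) (1 / 4 + ln 2)) as [e | ne].
    - rewrite e; lra.
    - left; apply exp_increasing; nra. }
  rewrite (exp_plus (1 / 4) (ln 2)), exp_ln in hexp by lra.
  rewrite !exp_plus in hexp.
  assert (h14 := exp_quarter_le).
  assert (0 < exp (b * ln 2)) by apply exp_pos.
  assert (0 < exp (- (3 / 4))) by apply exp_pos.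
  apply Rle_trans with (exp (2 - b) * exp (b * ln 2) * exp (- (3 / 4))); [|lra].
  apply Rmult_le_compat_r; [lra|]; apply Rmult_le_compat_r; lra.
Qed.

Definition kappa (beta : R) : R :=
  (beta - 1) * (2 - beta) * (3 - beta) * Rpower 4 beta * exp (- (9 / 4)) / 6.

Lemma cstar_kappa beta : cstar beta = - 2 * Psi beta * kappa beta.
Proof. unfold cstar, kappa; field. Qed.

Section Beta_in_1_2.

Variable beta : R.
Hypothesis hb1 : 1 < beta.
Hypothesis hb2 : beta < 2.

Lemma Psi_neg : Psi beta < 0.
Proof.
  unfold Psi; unfold Rdiv; rewrite Rmult_1_l; apply Rinv_lt_0_compat.
  assert (cos (PI * beta / 2) < 0) by (apply cos_lt_0; assert (PI > 0) by apply PI_RGT_0; nra).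
  lra.
Qed.

Lemma gsum_neg n : gsum beta (S n) < 0.
Proof.
  induction n as [|n IH]; [rewrite gsum_1; lra|].
  rewrite gsum_S, S_INR by lra.
  assert (0 <= INR n) by apply pos_INR.
  unfold Rdiv; rewrite Rmult_assoc; apply Rmult_neg_pos; [exact IH|].
  apply Rmult_gt_0_compat; [lra | apply Rinv_0_lt_compat; lra].
Qed.

Lemma gsum_le_S n : gsum beta (S n) <= gsum beta (S (S n)).
Proof.
  rewrite (gsum_S beta (S n)), S_INR by lra.
  assert (0 <= INR n) by apply pos_INR.
  assert (hs := gsum_neg n).
  replace (gsum beta (S n) * (INR n + 1 + 1 - beta) / (INR n + 1 + 1))
    with (gsum beta (S n) - gsum beta (S n) * (beta / (INR n + 2))) by (field; lra).
  assert (0 < beta / (INR n + 2)) by (apply Rdiv_lt_0_compat; lra).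
  assert (gsum beta (S n) * (beta / (INR n + 2)) < 0) by (apply Rmult_neg_pos; auto).
  lra.
Qed.

Lemma half_rnat0_lt_rsum n : (1 <= n)%nat -> rnat beta 0 / 2 < rsum beta n.
Proof.
  intros hn; rewrite rsum_gsum by exact hn.
  destruct n as [|n]; [lia|].
  assert (h1 := gsum_neg n); assert (h2 := gsum_neg (S n)); assert (hP := Psi_neg).
  assert (beta / 2 * gsum beta (S (S n)) + (2 - beta) / 2 * gsum beta (S n) < 0) by nra.
  nra.
Qed.

Lemma two_Psi_gsum_le m : (2 <= m)%nat ->
  2 * Psi beta * gsum beta m <= 2 * rsum beta (m - 1) - rnat beta 0.
Proof.
  intros hm; destruct m as [|[|n]]; [lia | lia|].
  replace (S (S n) - 1)%nat with (S n) by lia.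
  rewrite rsum_gsum by lia.
  assert (hmono := gsum_le_S n); assert (hP := Psi_neg).
  assert (beta / 2 * gsum beta (S (S n)) + (2 - beta) / 2 * gsum beta (S n)
          <= gsum beta (S (S n))) by nra.
  nra.
Qed.

Lemma ln_step_lower_bound M : 0 <= M ->
  1 / (M + 3) - 1 / (M + 1)
  <= ln ((M + 3 - beta) / (M + 3)) + beta * ln ((M + 3) / (M + 2)).
Proof.
  intros hM.
  set (u := (M + 3 - beta) / (M + 2)); set (v := (M + 3) / (M + 2)).
  assert (hu : 0 < u) by (unfold u; apply Rdiv_lt_0_compat; lra).
  assert (hv : 0 < v) by (unfold v; apply Rdiv_lt_0_compat; lra).
  replace (ln ((M + 3 - beta) / (M + 3)) + beta * ln v) with (ln u + (beta - 1) * ln v).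
  2:{ replace u with ((M + 3 - beta) / (M + 3) * v) by (unfold u, v; field; lra).
      rewrite ln_mult by (auto; apply Rdiv_lt_0_compat; lra); ring. }
  assert (hlu := ln_ge_1_minus_inv u hu).
  assert (hlv : (beta - 1) * (1 - / v) <= (beta - 1) * ln v).
  { apply Rmult_le_compat_l; [lra | exact (ln_ge_1_minus_inv v hv)]. }
  assert (E : (1 - / u) + (beta - 1) * (1 - / v) - (1 / (M + 3) - 1 / (M + 1))
              = (2 * (M + 3 - beta) - (beta - 1) * beta * (M + 1))
                / ((M + 3) * (M + 1) * (M + 3 - beta))).
  { unfold u, v; field; repeat split; lra. }
  assert (0 <= (2 * (M + 3 - beta) - (beta - 1) * beta * (M + 1))
                / ((M + 3) * (M + 1) * (M + 3 - beta))).
  { apply Rmult_le_pos.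
    - assert (0 <= (beta - 1) * beta <= 2) by (split; nra); nra.
    - left; apply Rinv_0_lt_compat; repeat apply Rmult_lt_0_compat; lra. }
  lra.
Qed.

Lemma ln_neg_gsum_lower_bound n :
  ln (- gsum beta 2) + beta * ln 2 - 3 / 2 + 1 / (INR n + 1) + 1 / (INR n + 2)
  <= ln (- gsum beta (S (S n))) + beta * ln (INR n + 2).
Proof.
  induction n as [|n IH].
  - simpl INR; rewrite !Rplus_0_l.
    assert (1 / 1 + 1 / 2 = 3 / 2) by field.
    lra.
  - rewrite S_INR; set (M := INR n) in *.
    assert (hM : 0 <= M) by apply pos_INR.
    assert (hs := gsum_neg (S n)).
    rewrite (gsum_S beta (S (S n))), !S_INR by lra; fold M.
    replace (- (gsum beta (S (S n)) * (M + 1 + 1 + 1 - beta) / (M + 1 + 1 + 1)))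
      with (- gsum beta (S (S n)) * ((M + 3 - beta) / (M + 3))) by (field; lra).
    replace (ln (M + 1 + 2)) with (ln (M + 2) + ln ((M + 3) / (M + 2)))
      by (rewrite <- ln_mult by (try apply Rdiv_lt_0_compat; lra); f_equal; field; lra).
    rewrite ln_mult by (try apply Rdiv_lt_0_compat; lra).
    assert (hstep := ln_step_lower_bound M hM).
    replace (M + 1 + 1) with (M + 2) by ring.
    replace (M + 1 + 2) with (M + 3) by ring.
    lra.
Qed.

Lemma neg_gsum_mul_Rpower_gt n :
  - gsum beta 2 * Rpower 2 beta * exp (- (3 / 2))
  < - gsum beta (S (S n)) * Rpower (INR (S (S n))) beta.
Proof.
  assert (hn : 0 <= INR n) by apply pos_INR.
  assert (h2 : 0 < - gsum beta 2) by (rewrite gsum_2; nra).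
  assert (hm : 0 < - gsum beta (S (S n))) by (assert (h := gsum_neg (S n)); lra).
  replace (INR (S (S n))) with (INR n + 2) by (rewrite !S_INR; ring).
  unfold Rpower.
  rewrite <- (exp_ln (- gsum beta 2)), <- (exp_ln (- gsum beta (S (S n)))), <- !exp_plus by lra.
  apply exp_increasing.
  assert (0 < 1 / (INR n + 1)) by (apply Rdiv_lt_0_compat; lra).
  assert (0 < 1 / (INR n + 2)) by (apply Rdiv_lt_0_compat; lra).
  assert (h := ln_neg_gsum_lower_bound n).
  lra.
Qed.

Lemma kappa_le : kappa beta <= - gsum beta 2 * Rpower 2 beta * exp (- (3 / 2)).
Proof.
  unfold kappa; rewrite gsum_2.
  replace (Rpower 4 beta) with (Rpower 2 beta * Rpower 2 beta)
    by (rewrite Rpower_mult_distr by lra; f_equal; ring).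
  replace (exp (- (9 / 4))) with (exp (- (3 / 2)) * exp (- (3 / 4)))
    by (rewrite <- exp_plus; f_equal; field).
  assert (hK := Rpower_2_bound beta ltac:(lra)).
  assert (0 < Rpower 2 beta) by apply exp_pos.
  assert (0 < exp (- (3 / 2))) by apply exp_pos.
  assert (0 < (beta - 1) * (2 - beta) * Rpower 2 beta * exp (- (3 / 2)) / 2).
  { apply Rdiv_lt_0_compat; [repeat apply Rmult_lt_0_compat|]; lra. }
  replace ((beta - 1) * (2 - beta) * (3 - beta) * (Rpower 2 beta * Rpower 2 beta)
           * (exp (- (3 / 2)) * exp (- (3 / 4))) / 6)
    with ((beta - 1) * (2 - beta) * Rpower 2 beta * exp (- (3 / 2)) / 2
          * ((3 - beta) * Rpower 2 beta * exp (- (3 / 4)) / 3)) by field.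
  replace (- ((1 - beta) * (2 - beta) / 2) * Rpower 2 beta * exp (- (3 / 2)))
    with ((beta - 1) * (2 - beta) * Rpower 2 beta * exp (- (3 / 2)) / 2 * 1) by field.
  apply Rmult_le_compat_l; lra.
Qed.

Lemma kappa_lt_neg_gsum_mul_Rpower m : (2 <= m)%nat ->
  kappa beta < - gsum beta m * Rpower (INR m) beta.
Proof.
  intros hm; destruct m as [|[|n]]; [lia | lia|].
  exact (Rle_lt_trans _ _ _ kappa_le (neg_gsum_mul_Rpower_gt n)).
Qed.

End Beta_in_1_2.

Theorem lemma2p8 (beta : R) (hb1 : 1 < beta) (hb2 : beta < 2) :
  (forall (m j : nat), (2 <= m)%nat -> (1 <= j)%nat -> (j <= m - 1)%nat ->
     zsum 0 (Z.of_nat m) (fun k => r beta (Z.of_nat j - k)%Z) > 0)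
  /\
  (forall m : nat, (2 <= m)%nat ->
     zsum (1 - Z.of_nat m)%Z (Z.of_nat m - 1)%Z (fun k => r beta k)
       > cstar beta / Rpower (INR m) beta
     /\ cstar beta / Rpower (INR m) beta > 0).
Proof.
  split.
  - intros m j hm hj hjm.
    rewrite zsum_reflect by lia.
    replace (Z.of_nat j - Z.of_nat m)%Z with (- Z.of_nat (m - j))%Z by lia.
    rewrite Z.sub_0_r, zsum_r.
    assert (h1 := half_rnat0_lt_rsum beta hb1 hb2 j hj).
    assert (h2 := half_rnat0_lt_rsum beta hb1 hb2 (m - j) ltac:(lia)).
    lra.
  - intros m hm.
    replace (1 - Z.of_nat m)%Z with (- Z.of_nat (m - 1))%Z by lia.
    replace (Z.of_nat m - 1)%Z with (Z.of_nat (m - 1)) by lia.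
    rewrite zsum_r, cstar_kappa.
    assert (hsum := two_Psi_gsum_le beta hb1 hb2 m hm).
    assert (hk := kappa_lt_neg_gsum_mul_Rpower beta hb1 hb2 m hm).
    assert (hP := Psi_neg beta hb1 hb2).
    assert (hpow : 0 < Rpower (INR m) beta) by apply exp_pos.
    assert (hkpos : 0 < kappa beta).
    { unfold kappa; apply Rdiv_lt_0_compat; [repeat apply Rmult_lt_0_compat|];
        try apply exp_pos; lra. }
    split; apply Rlt_gt.
    + apply Rmult_lt_reg_r with (Rpower (INR m) beta); [exact hpow|].
      unfold Rdiv; rewrite Rmult_assoc, Rinv_l, Rmult_1_r by lra.
      nra.
    + apply Rdiv_lt_0_compat; nra.
Qed.
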